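(* Let $\mathcal{G}$ be a locally finite one-ended Borel graph on a standard Borel space $X$ and let $\mathcal{B}$ be a Borel generating set for the cycle space of $\mathcal{G}$. Let $F\subseteq X$ be a finite set such that the induced subgraph $\mathcal{G}[F]$ is connected, and let $H:=\mathcal{G}[F]\setminus\ker(F)$. Then $\mathrm{ext}(H)$ is connected in $H$, i.e. any two vertices of $\mathrm{ext}(H)$ are joined by a path in $\mathcal{G}[F]$ using no edge of $\ker(F)$.
   Context: One-ended: every component is one-ended. The cycle space $\mathcal C(\mathcal G)$ is the subspace of $\mathbb Z_2[E(\mathcal G)]$ (finitely supported edge sets) generated by indicator functions of (finite) cycles. A Borel generating set is a Borel family $\mathcal B$ of finite cycles of $\mathcal G$ whose indicator functions generate $\mathcal C(\mathcal G)$. For an edge $e$, $e^\ast:=\{C\in\mathcal B: e\in E(C)\}$; for $U\subseteq X$, $\ker(U):=\{e\in\mathcal G: \text{every } C\in e^\ast \text{ is contained in } \mathcal G[U]\}$. For a finite subgraph $H$ of $\mathcal G$, the exterior $\mathrm{ext}(H)\subseteq V(H)$ is the set of vertices of $H$ belonging to an $H$-connected component $K$ for which there is an infinite ray in $\mathcal G$ starting at a vertex of $K$ and meeting $H$ only at its starting vertex. *)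

From Stdlib Require Import List Arith Relations.
Import ListNotations.
Set Implicit Arguments.

Section Defs.
Variable X : Type.
Variable adj : X -> X -> Prop.

Definition conn (R : X -> X -> Prop) : X -> X -> Prop := clos_refl_trans X R.

Definition infinite_set (P : X -> Prop) : Prop :=
  ~ exists l : list X, forall z, P z -> In z l.

Definition adj_minus (S : list X) (a b : X) : Prop :=
  adj a b /\ ~ In a S /\ ~ In b S.

Definition locally_finite : Prop :=
  forall x, exists l : list X, forall y, adj x y -> In y l.

(** one-ended: every connected component of G has exactly one end, i.e. for
    every finite vertex set S, the part of that component outside S has
    exactly one infinite connected component of G - S. *)
Definition one_ended : Prop :=
  forall (x : X) (S : list X),
    (exists y, conn adj x y /\ ~ In y S /\ infinite_set (conn (adj_minus S) y)) /\
    (forall y z, conn adj x y -> conn adj x z -> ~ In y S -> ~ In z S ->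
       infinite_set (conn (adj_minus S) y) ->
       infinite_set (conn (adj_minus S) z) ->
       conn (adj_minus S) y z).

(** finite cycles, represented by the cyclic list of their vertices *)
Definition is_cycle (C : list X) : Prop :=
  3 <= length C /\ NoDup C /\
  forall i, i < length C -> exists a b,
      nth_error C i = Some a /\ nth_error C (S i mod length C) = Some b /\ adj a b.

Definition cyc_edge (C : list X) (x y : X) : Prop :=
  exists i, i < length C /\
    ((nth_error C i = Some x /\ nth_error C (S i mod length C) = Some y) \/
     (nth_error C i = Some y /\ nth_error C (S i mod length C) = Some x)).

Fixpoint odd_count {A : Type} (P : A -> Prop) (l : list A) : Prop :=
  match l with
  | [] => False
  | a :: l' => (P a /\ ~ odd_count P l') \/ (~ P a /\ odd_count P l')
  end.

(** B (a family of finite cycles) generates the cycle space over Z_2: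
    the indicator of every finite cycle is a finite Z_2-sum of indicators of
    members of B. *)
Definition generates_cycle_space (B : list X -> Prop) : Prop :=
  (forall C, B C -> is_cycle C) /\
  forall C, is_cycle C -> exists Cs : list (list X),
      Forall B Cs /\
      forall x y, adj x y -> (cyc_edge C x y <-> odd_count (fun D => cyc_edge D x y) Cs).

Definition ker (B : list X -> Prop) (U : X -> Prop) (x y : X) : Prop :=
  adj x y /\ forall C, B C -> cyc_edge C x y -> forall v, In v C -> U v.

Definition H_adj (B : list X -> Prop) (F : list X) (x y : X) : Prop :=
  In x F /\ In y F /\ adj x y /\ ~ ker B (fun v => In v F) x y.

Definition ext (B : list X -> Prop) (F : list X) (u : X) : Prop :=
  In u F /\
  exists (w : X) (r : nat -> X),
    conn (H_adj B F) u w /\ r 0 = w /\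
    (forall n, adj (r n) (r (S n))) /\
    (forall m n, r m = r n -> m = n) /\
    (forall n, ~ In (r (S n)) F).

End Defs.

(* Suppose [u] and [v] lie in ext(H) but in different components of [H], and
   let [K] be the [H]-component of [u]. As [K] is closed under [H]-edges, the
   edges of [G[F]] leaving [K] are exactly the [ker(F)]-edges leaving [K];
   call this set [delta]. Follow a ray from [K] out of [F], join its exit point
   outside [F] to the exit point of a ray from the component of [v] (possible
   since [G] is one-ended), and return through the connected graph [G[F]] to
   [K]: this closed walk, hence some cycle [C], meets [delta] an odd number of
   times. But a generator [D] in [B] meeting [delta] contains a [ker(F)]-edge,
   so lies in [G[F]], where it crosses the cut of [K] an even number of times;
   as the parity of the number of edges in [delta] is additive over the cycle
   space generated by [B], it is even for [C], a contradiction. *)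

From Stdlib Require Import List Relations Arith Lia Classical ClassicalEpsilon ListDec
  Permutation Wf_nat FinFun.
Import ListNotations.

Definition indicator (P : Prop) : nat := if excluded_middle_informative P then 1 else 0.

Definition count {A} (P : A -> Prop) (l : list A) : nat :=
  list_sum (map (fun x => indicator (P x)) l).

Lemma indicator_true (P : Prop) : P -> indicator P = 1.
Proof. unfold indicator; destruct (excluded_middle_informative P); tauto. Qed.

Lemma indicator_false (P : Prop) : ~ P -> indicator P = 0.
Proof. unfold indicator; destruct (excluded_middle_informative P); tauto. Qed.

Lemma indicator_iff (P Q : Prop) : (P <-> Q) -> indicator P = indicator Q.
Proof.
  intros H; destruct (classic P).
  - rewrite !indicator_true; tauto.
  - rewrite !indicator_false; tauto.
Qed.

Lemma indicator_or (P Q : Prop) :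
  ~ (P /\ Q) -> indicator (P \/ Q) = indicator P + indicator Q.
Proof.
  intros H; unfold indicator.
  destruct (excluded_middle_informative (P \/ Q)), (excluded_middle_informative P),
    (excluded_middle_informative Q); tauto.
Qed.

Section Counting.
Context {A : Type}.
Implicit Types (P Q : A -> Prop) (l : list A).

Lemma count_cons P a l : count P (a :: l) = indicator (P a) + count P l.
Proof. reflexivity. Qed.

Lemma count_app P l1 l2 : count P (l1 ++ l2) = count P l1 + count P l2.
Proof. unfold count; rewrite map_app; apply list_sum_app. Qed.

Lemma count_perm P l1 l2 : Permutation l1 l2 -> count P l1 = count P l2.
Proof. intros H; apply Permutation_list_sum, Permutation_map, H. Qed.

Lemma count_ext P Q l : (forall x, In x l -> (P x <-> Q x)) -> count P l = count Q l.
Proof.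
  induction l as [|a l IH]; intros H; [reflexivity|].
  rewrite !count_cons, IH by (intros x Hx; apply H; right; exact Hx).
  f_equal; apply indicator_iff, H; left; reflexivity.
Qed.

Lemma count_zero P l : (forall x, In x l -> ~ P x) -> count P l = 0.
Proof.
  induction l as [|a l IH]; intros H; [reflexivity|].
  rewrite count_cons, IH, indicator_false; [reflexivity | apply H; left; reflexivity |].
  intros x Hx; apply H; right; exact Hx.
Qed.

Lemma count_or P Q l : (forall x, In x l -> ~ (P x /\ Q x)) ->
  count (fun x => P x \/ Q x) l = count P l + count Q l.
Proof.
  induction l as [|a l IH]; intros H; [reflexivity|].
  rewrite !count_cons, IH, indicator_or by (intros; apply H; simpl; auto).
  lia.
Qed.

Lemma count_eq_NoDup a l : NoDup l -> count (fun x => x = a) l = indicator (In a l).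
Proof.
  induction 1 as [|b l Hb _ IH]; [symmetry; apply indicator_false; tauto|].
  rewrite count_cons, IH, <- indicator_or; [reflexivity|].
  intros [-> Ha]; contradiction.
Qed.

Lemma odd_count_iff P l : odd_count P l <-> Nat.even (count P l) = false.
Proof.
  induction l as [|a l IH]; simpl; [split; [tauto|discriminate]|].
  rewrite IH, count_cons, Nat.even_add.
  destruct (classic (P a)) as [Ha|Ha];
    [rewrite indicator_true | rewrite indicator_false]; auto;
    destruct (Nat.even (count P l)); simpl; intuition congruence.
Qed.

End Counting.

Lemma list_sum_parity_ext {A} (f g : A -> nat) l :
  (forall x, In x l -> Nat.even (f x) = Nat.even (g x)) ->
  Nat.even (list_sum (map f l)) = Nat.even (list_sum (map g l)).
Proof.
  induction l as [|a l IH]; intros H; simpl; [reflexivity|].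
  rewrite !Nat.even_add, H, IH; [reflexivity | intros x Hx; apply H; right; exact Hx |].
  left; reflexivity.
Qed.

Lemma list_sum_even {A} (f : A -> nat) l :
  (forall x, In x l -> Nat.even (f x) = true) -> Nat.even (list_sum (map f l)) = true.
Proof.
  induction l as [|a l IH]; intros H; simpl; [reflexivity|].
  rewrite Nat.even_add, H, IH; [reflexivity | intros x Hx; apply H; right; exact Hx |].
  left; reflexivity.
Qed.

Lemma list_sum_map_add {A} (f g : A -> nat) l :
  list_sum (map (fun x => f x + g x) l) = list_sum (map f l) + list_sum (map g l).
Proof. induction l; simpl; lia. Qed.

Lemma list_sum_map_swap {A B} (h : A -> B -> nat) l1 l2 :
  list_sum (map (fun a => list_sum (map (h a) l2)) l1) =
  list_sum (map (fun b => list_sum (map (fun a => h a b) l1)) l2).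
Proof.
  induction l1 as [|a l1 IH]; simpl.
  - induction l2; simpl; auto.
  - rewrite IH, <- list_sum_map_add; reflexivity.
Qed.

(* Double counting over Z_2: when [Q] is the Z_2-sum of the sets [mem y],
   the [P]-elements of [Q] are counted mod 2 by adding up their counts in
   each [mem y]. *)
Lemma count_parity_xor_sum {A Y} (P Q : A -> Prop) (mem : Y -> A -> Prop)
    (M : list A) (Ys : list Y) :
  (forall m, P m -> (Q m <-> odd_count (fun y => mem y m) Ys)) ->
  Nat.even (count (fun m => P m /\ Q m) M) =
  Nat.even (list_sum (map (fun y => count (fun m => P m /\ mem y m) M) Ys)).
Proof.
  intros HQ. unfold count at 2.
  rewrite <- (list_sum_map_swap (fun m y => indicator (P m /\ mem y m))).
  apply list_sum_parity_ext; intros m _.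
  fold (count (fun y => P m /\ mem y m) Ys).
  destruct (classic (P m)) as [Pm|Pm].
  - rewrite (count_ext (fun y => P m /\ mem y m) (fun y => mem y m)) by tauto.
    destruct (classic (Q m)) as [Qm|Qm].
    + rewrite indicator_true by tauto.
      apply HQ, odd_count_iff in Qm; [rewrite Qm; reflexivity | exact Pm].
    + rewrite indicator_false by tauto.
      destruct (Nat.even (count _ Ys)) eqn:E; [reflexivity|].
      exfalso; apply Qm, HQ, odd_count_iff; assumption.
  - rewrite indicator_false, count_zero by tauto; reflexivity.
Qed.

Section Pairs.
Context {A : Type}.
Implicit Types (l C : list A) (a b c x y : A).

Fixpoint pairs l : list (A * A) :=
  match l with
  | [] => []
  | a :: t => match t with [] => [] | b :: _ => (a, b) :: pairs t end
  end.

Definition cpairs C : list (A * A) :=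
  match C with [] => [] | c :: _ => pairs (C ++ [c]) end.

Definition swap (p : A * A) : A * A := (snd p, fst p).

Lemma pairs_cons2 a b l : pairs (a :: b :: l) = (a, b) :: pairs (b :: l).
Proof. reflexivity. Qed.

Lemma swap_swap (p : A * A) : swap (swap p) = p.
Proof. destruct p; reflexivity. Qed.

Lemma last_cons a l d : last (a :: l) d = last l a.
Proof.
  revert a d; induction l as [|b l IH]; intros a d; [reflexivity|].
  change (last (a :: b :: l) d) with (last (b :: l) d); rewrite !IH; reflexivity.
Qed.

Lemma pairs_cons_app a l1 b l2 :
  pairs (a :: l1 ++ b :: l2) = pairs (a :: l1) ++ (last l1 a, b) :: pairs (b :: l2).
Proof.
  revert a; induction l1 as [|c l1 IH]; intros a; [reflexivity|].
  rewrite <- app_comm_cons, !pairs_cons2, IH, last_cons; reflexivity.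
Qed.

Lemma In_pairs x y l : In (x, y) (pairs l) -> In x l /\ In y l.
Proof.
  induction l as [|a [|b l] IH]; simpl; try tauto.
  intros [[= -> ->]|H]; [tauto|].
  specialize (IH H); simpl in IH; tauto.
Qed.

Lemma In_cpairs x y C : In (x, y) (cpairs C) -> In x C /\ In y C.
Proof.
  destruct C as [|c t]; [intros []|].
  intros H; apply In_pairs in H; rewrite !in_app_iff in H.
  simpl in H; intuition subst; simpl; auto.
Qed.

Lemma nth_error_pairs l i a b :
  nth_error (pairs l) i = Some (a, b) <-> nth_error l i = Some a /\ nth_error l (S i) = Some b.
Proof.
  revert i; induction l as [|x [|y l] IH]; intros [|i]; simpl;
    try (split; [discriminate | intros [? ?]; discriminate]).
  - split; [intros [= -> ->] | intros [[= ->] [= ->]]]; auto.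
  - apply IH.
Qed.

Lemma S_mod_cases i n : i < n -> (S i < n /\ S i mod n = S i) \/ (S i = n /\ S i mod n = 0).
Proof.
  intros H; destruct (Nat.lt_ge_cases (S i) n).
  - left; split; [assumption | apply Nat.mod_small; assumption].
  - right; assert (E : S i = n) by lia; split; [exact E | rewrite E; apply Nat.Div0.mod_same].
Qed.

Lemma nth_error_cpairs C i a b :
  nth_error (cpairs C) i = Some (a, b) <->
  i < length C /\ nth_error C i = Some a /\ nth_error C (S i mod length C) = Some b.
Proof.
  destruct C as [|c t]; [destruct i; simpl; split; [discriminate | lia | discriminate | lia]|].
  change (cpairs (c :: t)) with (pairs ((c :: t) ++ [c])); rewrite nth_error_pairs.
  assert (Hc : nth_error (c :: t) 0 = Some c) by reflexivity.
  assert (Hl : length (c :: t) > 0) by (simpl; lia).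
  remember (c :: t) as C eqn:EC.
  clear EC; split.
  - intros [H1 H2].
    assert (Hi : S i < length (C ++ [c])) by (apply nth_error_Some; congruence).
    rewrite length_app in Hi; simpl in Hi.
    rewrite nth_error_app1 in H1 by lia.
    destruct (S_mod_cases i (length C)) as [[Hlt ->]|[Heq ->]]; [lia | |].
    + rewrite nth_error_app1 in H2 by lia; split; [lia | split; assumption].
    + rewrite nth_error_app2, Heq, Nat.sub_diag in H2 by lia; simpl in H2.
      split; [lia | split; congruence].
  - intros [Hi [H1 H2]]; rewrite nth_error_app1 by lia; split; [exact H1|].
    destruct (S_mod_cases i (length C) Hi) as [[Hlt E]|[Heq E]]; rewrite E in H2.
    + rewrite nth_error_app1 by lia; exact H2.
    + rewrite nth_error_app2, Heq, Nat.sub_diag by lia; simpl; congruence.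
Qed.

Lemma cyc_edge_cpairs C x y :
  cyc_edge C x y <-> In (x, y) (cpairs C) \/ In (y, x) (cpairs C).
Proof.
  unfold cyc_edge; split.
  - intros [i [Hi [[H1 H2]|[H1 H2]]]]; [left | right];
      apply nth_error_In with i, nth_error_cpairs; auto.
  - intros [H|H]; apply In_nth_error in H as [i Hi];
      apply nth_error_cpairs in Hi as [? [? ?]]; exists i; auto.
Qed.

Lemma NoDup_cpairs C : NoDup C -> NoDup (cpairs C).
Proof.
  intros Hn; apply NoDup_nth_error; intros i j Hi Heq.
  apply nth_error_Some in Hi.
  destruct (nth_error (cpairs C) i) as [[a b]|] eqn:E; [|congruence].
  symmetry in Heq; apply nth_error_cpairs in E as [? [E1 _]], Heq as [? [E2 _]].
  apply (proj1 (NoDup_nth_error C) Hn); congruence.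
Qed.

Lemma cpairs_swap_notin C p : NoDup C -> 3 <= length C ->
  In p (cpairs C) -> ~ In (swap p) (cpairs C).
Proof.
  destruct p as [a b]; unfold swap; simpl; intros Hn H3 H1 H2.
  apply In_nth_error in H1 as [i Hi], H2 as [j Hj].
  apply nth_error_cpairs in Hi as [Hi [Ha Hb]], Hj as [Hj [Hb' Ha']].
  pose proof (proj1 (NoDup_nth_error C) Hn) as Inj.
  assert (E1 : j = S i mod length C) by (apply Inj; [assumption | congruence]).
  assert (E2 : i = S j mod length C) by (apply Inj; [assumption | congruence]).
  destruct (S_mod_cases i _ Hi) as [[? ?]|[? ?]], (S_mod_cases j _ Hj) as [[? ?]|[? ?]]; lia.
Qed.

Lemma cpairs_repeat_perm C1 z C2 C3 :
  Permutation (cpairs (C1 ++ z :: C2 ++ z :: C3)) (cpairs (z :: C2) ++ cpairs (C1 ++ z :: C3)).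
Proof.
  assert (Hloop : cpairs (z :: C2) = pairs (z :: C2) ++ [(last C2 z, z)])
    by apply (pairs_cons_app z C2 z []).
  rewrite Hloop; destruct C1 as [|a C1]; rewrite ?app_nil_l.
  - change (cpairs (z :: C2 ++ z :: C3)) with (pairs (z :: (C2 ++ z :: C3) ++ [z])).
    change (cpairs (z :: C3)) with (pairs (z :: C3 ++ [z])).
    rewrite <- app_assoc, <- app_comm_cons, pairs_cons_app, <- app_assoc.
    reflexivity.
  - change (cpairs ((a :: C1) ++ z :: C2 ++ z :: C3))
      with (pairs (a :: (C1 ++ z :: C2 ++ z :: C3) ++ [a])).
    change (cpairs ((a :: C1) ++ z :: C3)) with (pairs (a :: (C1 ++ z :: C3) ++ [a])).
    repeat rewrite <- ?app_assoc, <- ?app_comm_cons.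
    rewrite (pairs_cons_app a C1 z (C2 ++ _)), (pairs_cons_app a C1 z (C3 ++ _)),
      (pairs_cons_app z C2 z), app_nil_l.
    set (e := (last C1 a, z)); set (f := (last C2 z, z)).
    pose proof (Permutation_app_swap_app (pairs (a :: C1) ++ [e]) (pairs (z :: C2) ++ [f])
      (pairs (z :: C3 ++ [a]))) as HP.
    rewrite <- !app_assoc in HP; exact HP.
Qed.

End Pairs.

Section Walks.
Context {X : Type}.
Implicit Types (R : X -> X -> Prop) (a b : X) (l W : list X).

Definition walk R (w : list X) : Prop := forall p, In p (pairs w) -> R (fst p) (snd p).

(* A closed walk is given by its cyclic vertex sequence [W], whose first vertex
   is not repeated at the end. *)
Definition closed_walk R W : Prop := forall p, In p (cpairs W) -> R (fst p) (snd p).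

Lemma is_cycle_cpairs (adj : X -> X -> Prop) C :
  is_cycle adj C <-> 3 <= length C /\ NoDup C /\ closed_walk adj C.
Proof.
  split.
  - intros [H3 [Hn Ha]]; do 2 (split; [assumption|]).
    intros [a b] Hp; apply In_nth_error in Hp as [i Hi].
    apply nth_error_cpairs in Hi as [Hi [H1 H2]].
    destruct (Ha i Hi) as [a' [b' [E1 [E2 Hab]]]]; simpl; congruence.
  - intros [H3 [Hn Ha]]; do 2 (split; [assumption|]); intros i Hi.
    destruct (nth_error C i) as [a|] eqn:E1; [|apply nth_error_Some in Hi; congruence].
    assert (Hj : S i mod length C < length C) by (apply Nat.mod_upper_bound; lia).
    destruct (nth_error C (S i mod length C)) as [b|] eqn:E2;
      [|apply nth_error_Some in Hj; congruence].
    exists a, b; do 2 (split; [reflexivity|]).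
    apply (Ha (a, b)), nth_error_In with i, nth_error_cpairs; auto.
Qed.

Lemma conn_walk R a b : conn R a b -> exists l, walk R (a :: l) /\ last l a = b.
Proof.
  intros H; apply clos_rt_rt1n in H.
  induction H as [x|x y z Hxy _ [l [Hl Hlast]]]; [exists []; split; [intros _ []|reflexivity]|].
  exists (y :: l); split; [|rewrite last_cons; exact Hlast].
  intros p Hp; rewrite pairs_cons2 in Hp; destruct Hp as [<-|Hp]; [exact Hxy | exact (Hl p Hp)].
Qed.

Lemma walk_vertices R (Q : X -> Prop) a l :
  (forall x y, R x y -> Q y) -> Q a -> walk R (a :: l) -> forall y, In y (a :: l) -> Q y.
Proof.
  intros HR; revert a; induction l as [|b l IH]; intros a Qa Hw y [<-|Hy];
    [exact Qa | destruct Hy | exact Qa |].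
  assert (Hab : R a b) by (apply (Hw (a, b)); rewrite pairs_cons2; left; reflexivity).
  apply (IH b (HR a b Hab)); [|exact Hy].
  intros p Hp; apply Hw; rewrite pairs_cons2; right; exact Hp.
Qed.

Lemma conn_invariant R (Q : X -> Prop) a b :
  (forall x y, Q x -> R x y -> Q y) -> Q a -> conn R a b -> Q b.
Proof. intros HQ Qa H; induction H; eauto. Qed.

Lemma conn_mono R R' a b : (forall x y, R x y -> R' x y) -> conn R a b -> conn R' a b.
Proof. intros HR H; induction H; [apply rt_step, HR | apply rt_refl | eapply rt_trans]; eauto. Qed.

Lemma conn_sym R a b : (forall x y, R x y -> R y x) -> conn R a b -> conn R b a.
Proof. intros HR H; induction H; [apply rt_step, HR | apply rt_refl | eapply rt_trans]; eauto. Qed.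

End Walks.

Section Crossing.
Context {X : Type} (K : X -> Prop).

Definition crosses (p : X * X) : Prop :=
  (K (fst p) /\ ~ K (snd p)) \/ (~ K (fst p) /\ K (snd p)).

Lemma indicator_crosses a b :
  indicator (crosses (a, b)) + 2 * (indicator (K a) * indicator (K b)) =
  indicator (K a) + indicator (K b).
Proof.
  unfold crosses, indicator; simpl.
  destruct (excluded_middle_informative (K a)), (excluded_middle_informative (K b)),
    (excluded_middle_informative ((K a /\ ~ K b) \/ (~ K a /\ K b))); tauto || lia.
Qed.

Lemma count_crosses_walk a l :
  Nat.even (count crosses (pairs (a :: l)) + indicator (K a) + indicator (K (last l a))) = true.
Proof.
  revert a; induction l as [|b l IH]; intros a.
  - replace (count crosses (pairs [a]) + _ + _) with (2 * indicator (K a)) by (simpl; lia).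
    apply Nat.even_mul.
  - rewrite pairs_cons2, count_cons, last_cons.
    specialize (IH b); pose proof (indicator_crosses a b) as Hx.
    set (c := count crosses (pairs (b :: l))) in *.
    set (ia := indicator (K a)) in *; set (ib := indicator (K b)) in *.
    set (iab := ia * ib) in *; set (iL := indicator (K (last l b))) in *.
    rewrite <- (Nat.even_add_mul_2 _ iab).
    replace (indicator (crosses (a, b)) + c + ia + iL + 2 * iab) with (c + ib + iL + 2 * ia)
      by lia.
    rewrite Nat.even_add_mul_2; exact IH.
Qed.

Lemma count_crosses_closed_walk W : Nat.even (count crosses (cpairs W)) = true.
Proof.
  destruct W as [|c t]; [reflexivity|].
  pose proof (count_crosses_walk c (t ++ [c])) as H; rewrite last_last in H.
  change (cpairs (c :: t)) with (pairs (c :: t ++ [c])).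
  rewrite <- Nat.add_assoc, <- Nat.mul_1_l with (n := indicator (K c)), <- Nat.mul_add_distr_r,
    Nat.even_add_mul_2 in H.
  exact H.
Qed.

End Crossing.

Section Orientations.
Context {A : Type} (E : A * A -> Prop) (M : list (A * A)).
Hypothesis M_NoDup : NoDup M.
Hypothesis E_in_M : forall m, E m -> In m M.
Hypothesis E_swap : forall p, E p -> ~ E (swap p).

Lemma count_and_eq q : count (fun m => E m /\ m = q) M = indicator (E q).
Proof.
  destruct (classic (E q)) as [Eq|nEq].
  - rewrite (count_ext _ (fun m => m = q)) by (intros m _; split; [tauto | intros ->; auto]).
    rewrite count_eq_NoDup by exact M_NoDup.
    apply indicator_iff; split; [intros _; exact Eq | apply E_in_M].
  - rewrite count_zero, indicator_false; [reflexivity | exact nEq |].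
    intros m _ [Hm ->]; contradiction.
Qed.

(* Both sides count the unordered pairs [{p, swap p}] of [P] having an
   [E]-orientation, which is unique by [E_swap]. *)
Lemma count_orientations P : NoDup P -> (forall p, In p P -> ~ In (swap p) P) ->
  count (fun m => E m /\ (In m P \/ In (swap m) P)) M = count (fun p => E p \/ E (swap p)) P.
Proof.
  induction P as [|p P IH]; intros HP Hsw.
  - apply count_zero; intros m _ [_ [[]|[]]].
  - inversion HP as [|? ? Hp HP']; subst.
    assert (Hp' : ~ In (swap p) P) by (intros H; apply (Hsw p); simpl; auto).
    rewrite count_cons, <- IH by (try intros q Hq; auto; intros Hq'; apply (Hsw q); simpl; auto).
    rewrite indicator_or by (intros [H1 H2]; exact (E_swap p H1 H2)).
    rewrite <- (count_and_eq p), <- (count_and_eq (swap p)), <- !count_or.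
    + apply count_ext; intros m _; simpl.
      assert (Hs : p = swap m <-> m = swap p)
        by (split; intros ->; symmetry; apply swap_swap).
      rewrite Hs; intuition (subst; auto).
    + intros m _ [[[Em ->]|[Em ->]] [_ [Hm|Hm]]]; rewrite ?swap_swap in Hm; contradiction.
    + intros m _ [[Em ->] [_ Hm]]; apply (E_swap p Em); rewrite <- Hm; exact Em.
Qed.

Lemma count_cyc_edges C : NoDup C -> 3 <= length C ->
  count (fun m => E m /\ cyc_edge C (fst m) (snd m)) M =
  count (fun p => E p \/ E (swap p)) (cpairs C).
Proof.
  intros Hnd H3; rewrite <- count_orientations.
  - apply count_ext; intros [a b] _; rewrite cyc_edge_cpairs; reflexivity.
  - apply NoDup_cpairs, Hnd.
  - intros p; apply cpairs_swap_notin; assumption.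
Qed.

End Orientations.

Section OddCycles.
Context {X : Type} (adj : X -> X -> Prop) (T : X * X -> Prop).

Hypothesis adj_irrefl : forall x, ~ adj x x.
Hypothesis T_swap : forall p, T (swap p) <-> T p.

(* A closed walk repeating a vertex splits there into two shorter closed walks
   whose [T]-counts add up, so one of them is again odd. *)
Lemma odd_closed_walk_odd_cycle W :
  closed_walk adj W -> Nat.even (count T (cpairs W)) = false ->
  exists C, is_cycle adj C /\ Nat.even (count T (cpairs C)) = false.
Proof.
  induction W as [W IH] using (induction_ltof1 _ (@length X)); intros HW Hodd.
  destruct (classic (NoDup W)) as [Hnd|Hdup].
  - destruct (Nat.le_gt_cases 3 (length W)) as [H3|Hsmall].
    + exists W; split; [apply is_cycle_cpairs; auto | exact Hodd].
    + exfalso; destruct W as [|x [|y [|z W]]]; simpl in Hsmall; try lia.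
      * discriminate Hodd.
      * apply (adj_irrefl x), (HW (x, x)); left; reflexivity.
      * change (cpairs [x; y]) with [(x, y); swap (x, y)] in Hodd.
        rewrite !count_cons, (indicator_iff _ _ (T_swap (x, y))) in Hodd.
        change (count T []) with 0 in Hodd.
        replace (indicator (T (x, y)) + (indicator (T (x, y)) + 0))
          with (2 * indicator (T (x, y))) in Hodd by lia.
        rewrite Nat.even_mul in Hodd; discriminate Hodd.
  - apply not_NoDup in Hdup as [z [W1 [W2 [W3 ->]]]]; [|intros a b; apply classic].
    pose proof (cpairs_repeat_perm W1 z W2 W3) as HP.
    assert (Hsub : forall W', incl (cpairs W') (cpairs (z :: W2) ++ cpairs (W1 ++ z :: W3)) ->
      closed_walk adj W').
    { intros W' Hincl p Hp; apply HW, (Permutation_in _ (Permutation_sym HP)), Hincl, Hp. }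
    rewrite (count_perm T _ _ HP), count_app, Nat.even_add in Hodd.
    destruct (Nat.even (count T (cpairs (z :: W2)))) eqn:E1,
      (Nat.even (count T (cpairs (W1 ++ z :: W3)))) eqn:E2; try discriminate Hodd.
    + apply (IH (W1 ++ z :: W3)); [| apply Hsub, incl_appr, incl_refl | exact E2].
      unfold ltof; rewrite !length_app; simpl; rewrite length_app; simpl; lia.
    + apply (IH (z :: W2)); [| apply Hsub, incl_appl, incl_refl | exact E1].
      unfold ltof; rewrite !length_app; simpl; rewrite length_app; simpl; lia.
Qed.

End OddCycles.

Section Rays.
Context {X : Type} (adj : X -> X -> Prop) (F : list X).

Definition escaping_ray (r : nat -> X) : Prop :=
  (forall n, adj (r n) (r (S n))) /\ (forall m n, r m = r n -> m = n) /\
  (forall n, ~ In (r (S n)) F).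

Lemma injective_infinite (P : X -> Prop) (r : nat -> X) :
  (forall n, P (r n)) -> (forall m n, r m = r n -> m = n) -> infinite_set P.
Proof.
  intros HP Hinj [l Hl].
  assert (Hnd : NoDup (map r (seq 0 (S (length l))))).
  { apply Injective_map_NoDup; [intros m n; apply Hinj | apply seq_NoDup]. }
  assert (Hincl : incl (map r (seq 0 (S (length l)))) l).
  { intros x Hx; apply in_map_iff in Hx as [n [<- _]]; apply Hl, HP. }
  pose proof (NoDup_incl_length Hnd Hincl) as Hlen.
  rewrite length_map, length_seq in Hlen; lia.
Qed.

Lemma escaping_ray_infinite r :
  escaping_ray r -> infinite_set (conn (adj_minus adj F) (r 1)).
Proof.
  intros [Hadj [Hinj Hout]]; apply (injective_infinite _ (fun n => r (S n))).
  - induction n as [|n IH]; [apply rt_refl|].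
    apply rt_trans with (r (S n)); [exact IH | apply rt_step; repeat split; auto].
  - intros m n E; apply Hinj in E; lia.
Qed.

(* Both exit points lie in infinite components of [G - F] within one component
   of [G], and one-endedness makes these components equal. *)
Lemma escaping_rays_connected r s :
  one_ended adj -> escaping_ray r -> escaping_ray s -> conn adj (r 0) (s 0) ->
  conn (adj_minus adj F) (r 1) (s 1).
Proof.
  intros oe Hr Hs Hrs; destruct (oe (r 0) F) as [_ Huniq].
  apply Huniq; [| | apply Hr | apply Hs | apply escaping_ray_infinite, Hr
    | apply escaping_ray_infinite, Hs].
  - apply rt_step, Hr.
  - apply rt_trans with (s 0); [exact Hrs | apply rt_step, Hs].
Qed.

End Rays.

Section Kernel.
Context {X : Type} (adj : X -> X -> Prop) (B : list X -> Prop).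
Hypothesis adj_sym : forall x y, adj x y -> adj y x.

Lemma ker_sym (U : X -> Prop) x y : ker adj B U x y -> ker adj B U y x.
Proof.
  intros [Hxy Hc]; split; [apply adj_sym, Hxy|].
  intros C HC [i [Hi Hor]]; apply (Hc C HC); exists i; tauto.
Qed.

Lemma H_adj_sym F x y : H_adj adj B F x y -> H_adj adj B F y x.
Proof.
  intros [Hx [Hy [Hxy Hk]]]; repeat split; auto.
  intros Hk'; apply Hk, ker_sym, Hk'.
Qed.

End Kernel.

Section CutOfAComponent.
Context {X : Type} (adj : X -> X -> Prop) (B : list X -> Prop) (F : list X) (K : X -> Prop).
Hypothesis adj_sym : forall x y, adj x y -> adj y x.
Hypothesis hB : generates_cycle_space adj B.
Hypothesis K_sub_F : forall x, K x -> In x F.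
Hypothesis K_closed : forall a b, K a -> H_adj adj B F a b -> K b.

Definition ker_boundary (p : X * X) : Prop :=
  K (fst p) /\ In (snd p) F /\ ~ K (snd p) /\ ker adj B (fun v => In v F) (fst p) (snd p).

Definition cut_edge (p : X * X) : Prop := ker_boundary p \/ ker_boundary (swap p).

Lemma cut_edge_swap p : cut_edge (swap p) <-> cut_edge p.
Proof. unfold cut_edge; rewrite swap_swap; tauto. Qed.

Lemma cut_edge_in_F p : cut_edge p -> In (fst p) F /\ In (snd p) F.
Proof. destruct p; intros [[Ka [Hb _]]|[Kb [Ha _]]]; simpl in *; auto. Qed.

(* Since [K] is closed under the edges of [H], every edge of [G[F]] leaving
   [K] lies in [ker(F)]. *)
Lemma crosses_iff_cut_edge a b :
  In a F -> In b F -> adj a b -> (crosses K (a, b) <-> cut_edge (a, b)).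
Proof.
  intros Ha Hb Hab; unfold cut_edge, ker_boundary, crosses; simpl; split.
  - intros [[Ka nKb]|[nKa Kb]]; [left | right]; do 3 (split; [assumption|]);
      apply NNPP; intros Hk.
    + apply nKb, (K_closed a); repeat split; auto.
    + apply nKa, (K_closed b); repeat split; auto.
  - intros [[Ka [_ [nKb _]]]|[Kb [_ [nKa _]]]]; auto.
Qed.

Lemma generator_cut_even D : B D -> Nat.even (count cut_edge (cpairs D)) = true.
Proof.
  intros HD.
  destruct (proj1 (is_cycle_cpairs adj D) (proj1 hB D HD)) as [_ [_ HDw]].
  destruct (classic (exists p, In p (cpairs D) /\ cut_edge p)) as [[[a b] [Hp Hcut]]|Hnone].
  - assert (DF : forall v, In v D -> In v F).
    { destruct Hcut as [[_ [_ [_ [_ Hk]]]]|[_ [_ [_ [_ Hk]]]]];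
        apply (Hk D HD); apply cyc_edge_cpairs; simpl; auto. }
    rewrite <- (count_ext (crosses K)); [apply count_crosses_closed_walk|].
    intros [x y] Hxy; apply crosses_iff_cut_edge.
    + apply DF, (In_cpairs _ _ _ Hxy).
    + apply DF, (In_cpairs _ _ _ Hxy).
    + apply (HDw _ Hxy).
  - rewrite count_zero; [reflexivity|].
    intros p Hp Hc; apply Hnone; exists p; auto.
Qed.

(* Counting the oriented [ker_boundary] pairs inside a fixed finite list
   makes the parity of the cut a linear functional on the cycle space. *)
Lemma cycle_cut_even C : is_cycle adj C -> Nat.even (count cut_edge (cpairs C)) = true.
Proof.
  intros HC.
  set (M := nodup (fun p q : X * X => excluded_middle_informative (p = q)) (list_prod F F)).
  assert (HM : NoDup M) by apply NoDup_nodup.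
  assert (HinM : forall m, ker_boundary m -> In m M).
  { intros [a b] [Ka [Hb _]]; apply nodup_In, in_prod; auto. }
  assert (Hsw : forall p, ker_boundary p -> ~ ker_boundary (swap p)).
  { intros [a b] [Ka _] [_ [_ [nKa _]]]; contradiction. }
  assert (Hcount : forall D, is_cycle adj D ->
    count (fun m => ker_boundary m /\ cyc_edge D (fst m) (snd m)) M = count cut_edge (cpairs D)).
  { intros D HD; apply is_cycle_cpairs in HD as [H3 [Hnd _]].
    apply (count_cyc_edges ker_boundary M HM HinM Hsw D Hnd H3). }
  destruct (proj2 hB C HC) as [Cs [HCs Hsum]].
  rewrite <- Hcount, (count_parity_xor_sum _ _ (fun D m => cyc_edge D (fst m) (snd m)) M Cs);
    [| intros [a b] [_ [_ [_ [Hab _]]]]; apply Hsum, Hab | exact HC].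
  apply list_sum_even; intros D HD; rewrite Forall_forall in HCs.
  rewrite Hcount by apply (proj1 hB), HCs, HD.
  apply generator_cut_even, HCs, HD.
Qed.

Hypothesis adj_irrefl : forall x, ~ adj x x.

(* Going out of [K] along the first ray, around outside [F] to the second ray
   and back through [G[F]] is a closed walk crossing the cut [K] once outside
   [G[F]], hence an odd number of times through [ker(F)]. *)
Lemma odd_cut_cycle wu wv a b :
  K wu -> ~ K wv -> adj wu a -> adj b wv -> ~ In a F -> ~ In b F ->
  conn (adj_minus adj F) a b -> conn (fun x y => adj x y /\ In x F /\ In y F) wv wu ->
  exists C, is_cycle adj C /\ Nat.even (count cut_edge (cpairs C)) = false.
Proof.
  intros Kwu nKwv Hwa Hbw aF bF Hout Hin.
  apply conn_walk in Hout as [l1 [Hw1 Hl1]]; apply conn_walk in Hin as [l2 [Hw2 Hl2]].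
  assert (HW : cpairs (wv :: l2 ++ a :: l1) =
    pairs (wv :: l2) ++ (wu, a) :: pairs (a :: l1) ++ [(b, wv)]).
  { change (cpairs (wv :: l2 ++ a :: l1)) with (pairs (wv :: (l2 ++ a :: l1) ++ [wv])).
    rewrite <- app_assoc, <- app_comm_cons, (pairs_cons_app wv l2 a), Hl2,
      (pairs_cons_app a l1 wv []), Hl1; reflexivity. }
  assert (outside : forall y, In y (a :: l1) -> ~ In y F).
  { apply (walk_vertices (adj_minus adj F)); [| exact aF | exact Hw1].
    intros x y [_ [_ Hy]]; exact Hy. }
  assert (no_cut_outside : count cut_edge ((wu, a) :: pairs (a :: l1) ++ [(b, wv)]) = 0).
  { apply count_zero; intros [x y] Hxy Hcut; apply cut_edge_in_F in Hcut as [Hx Hy].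
    simpl in Hx, Hy; apply in_inv in Hxy as [[= <- <-]|Hxy]; [exact (aF Hy)|].
    apply in_app_iff in Hxy as [Hxy|[[= <- <-]|[]]]; [|exact (bF Hx)].
    apply In_pairs in Hxy as [Hx' _]; exact (outside x Hx' Hx). }
  assert (inside_odd : Nat.even (count cut_edge (pairs (wv :: l2))) = false).
  { rewrite <- (count_ext (crosses K)).
    - pose proof (count_crosses_walk K wv l2) as Hpar.
      rewrite Hl2, (indicator_false (K wv)), (indicator_true (K wu)),
        Nat.add_0_r, Nat.add_1_r, Nat.even_succ in Hpar by assumption.
      rewrite <- Nat.negb_odd, Hpar; reflexivity.
    - intros [x y] Hxy; destruct (Hw2 _ Hxy) as [Hxy' [Hx Hy]].
      apply crosses_iff_cut_edge; assumption. }
  apply (odd_closed_walk_odd_cycle adj cut_edge adj_irrefl cut_edge_swap (wv :: l2 ++ a :: l1)).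
  - intros p; rewrite HW, in_app_iff; intros [Hp|[<-|Hp]]; [now apply Hw2 | exact Hwa |].
    apply in_app_iff in Hp as [Hp|[<-|[]]]; [apply Hw1, Hp | exact Hbw].
  - rewrite HW, count_app, no_cut_outside, Nat.add_0_r; exact inside_odd.
Qed.

End CutOfAComponent.

Theorem lemma3p14 (X : Type) (adj : X -> X -> Prop) (B : list X -> Prop)
    (F : list X)
    (adj_sym : forall x y, adj x y -> adj y x)
    (adj_irrefl : forall x, ~ adj x x)
    (lf : locally_finite adj)
    (oe : one_ended adj)
    (hB : generates_cycle_space adj B)
    (hF : forall x y, In x F -> In y F ->
            conn (fun a b => adj a b /\ In a F /\ In b F) x y) :
  forall u v, ext adj B F u -> ext adj B F v -> conn (H_adj adj B F) u v.
Proof.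
  intros u v [uF [wu [ru [Huw [ru0 ru_ray]]]]] [vF [wv [rv [Hvw [rv0 rv_ray]]]]].
  apply NNPP; intros Huv.
  set (K := conn (H_adj adj B F) u).
  assert (H_into_F : forall x y, In x F -> H_adj adj B F x y -> In y F)
    by (intros x y _ [_ [Hy _]]; exact Hy).
  assert (K_sub_F : forall x, K x -> In x F)
    by (intros x; apply (conn_invariant _ (fun y => In y F)); assumption).
  assert (K_closed : forall a b, K a -> H_adj adj B F a b -> K b)
    by (intros a b Ha Hab; apply rt_trans with a; [exact Ha | apply rt_step, Hab]).
  assert (wvF : In wv F) by (apply (conn_invariant _ (fun y => In y F) v wv H_into_F vF Hvw)).
  assert (nKwv : ~ K wv).
  { intros Hwv; apply Huv, rt_trans with wv; [exact Hwv|].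
    apply (conn_sym (H_adj adj B F)); [apply H_adj_sym, adj_sym | exact Hvw]. }
  assert (Hexits : conn (adj_minus adj F) (ru 1) (rv 1)).
  { apply (escaping_rays_connected adj F ru rv oe ru_ray rv_ray).
    rewrite ru0, rv0; apply (conn_mono (fun x y => adj x y /\ In x F /\ In y F)).
    - intros x y [Hxy _]; exact Hxy.
    - apply hF; [apply K_sub_F, Huw | exact wvF]. }
  assert (Hwu_exit : adj wu (ru 1)) by (rewrite <- ru0; apply (proj1 ru_ray)).
  assert (Hexit_wv : adj (rv 1) wv) by (rewrite <- rv0; apply adj_sym, (proj1 rv_ray)).
  destruct (odd_cut_cycle adj B F K adj_sym K_sub_F K_closed adj_irrefl wu wv (ru 1) (rv 1)
    Huw nKwv Hwu_exit Hexit_wv (proj2 (proj2 ru_ray) 0) (proj2 (proj2 rv_ray) 0) Hexits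
    (hF wv wu wvF (K_sub_F wu Huw))) as [C [HC Hodd]].
  rewrite (cycle_cut_even adj B F K adj_sym hB K_sub_F K_closed C HC) in Hodd; discriminate.
Qed.
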